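(* For all integers $k\geq 1$, $V(F_{2k+1}-1)=V(F_{2k+1}-2)=F_{2k-1}$ and $V(F_{2k+2}-2)=F_{2k}$.
   Context: Fibonacci numbers: $F_0=0$, $F_1=1$, $F_{m+2}=F_{m+1}+F_m$. Standard Fibonacci words: $f_{-1}=b$, $f_0=a$, $f_{m+1}=f_mf_{m-1}$. The Fibonacci word ${\bf f}=\lim f_m=abaababa\cdots$, with prefix of length $j$ denoted ${\bf f}(0..j]$. $V(N)$ is the number of factorizations of ${\bf f}(0..N]$ as $f_m^{k_m}\cdots f_0^{k_0}$ with all $k_i\geq 0$ (into standard words $f_i$, $i\geq0$, in non-strictly decreasing order of index), counted up to leading zero exponents; $V(0)=1$. *)

From mathcomp Require Import all_boot.
Set Implicit Arguments. Unset Strict Implicit. Unset Printing Implicit Defensive.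

Fixpoint fib (n : nat) : nat :=
  match n with
  | 0 => 0
  | 1 => 1
  | (m.+1 as p).+1 => fib p + fib m
  end.

Definition la : bool := false.
Definition lb : bool := true.

(* Standard Fibonacci words f_m for m >= 0:
   f_0 = a, f_1 = f_0 f_{-1} = ab, f_{m+2} = f_{m+1} f_m. *)
Fixpoint fibw (m : nat) : seq bool :=
  match m with
  | 0 => [:: la]
  | 1 => [:: la; lb]
  | (p.+1 as q).+1 => fibw q ++ fibw p
  end.

(* Prefix f(0..N] of length N of the infinite Fibonacci word.  Every f_m is a
   prefix of f_{m+1}, and |f_N| = F_{N+2} >= N, so this is the length-N
   prefix of the limit word. *)
Definition fprefix (N : nat) : seq bool := take N (fibw N).

Definition fact_word (n : nat) (k : 'I_n.+1 -> nat) : seq bool :=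
  flatten [seq flatten (nseq (k i) (fibw i)) | i <- rev (enum 'I_n.+1)].

(* V(N): number of factorizations f_m^{k_m} ... f_0^{k_0} of f(0..N], counted up
   to leading zero exponents.  Identifying sequences up to leading zeros is the
   same as padding them to the fixed length N+1 (indices 0..N): if k_i >= 1 then
   |f_i| = F_{i+2} >= i+1 must be <= N, so i < N, and every k_i <= N.  Hence the
   factorizations are exactly the exponent vectors in {0..N}^{N+1}. *)
Definition V (N : nat) : nat :=
  #|[set k : {ffun 'I_N.+1 -> 'I_N.+1} |
       fact_word (fun i => nat_of_ord (k i)) == fprefix N]|.

From mathcomp Require Import all_boot zify.
Set Implicit Arguments. Unset Strict Implicit. Unset Printing Implicit Defensive.

(* The morphism phi : a |-> ab, b |-> a maps f_m to f_(m+1), so a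
   factorization f_n^k_n ... f_1^k_1 f_0^k_0 is the image of
   f_(n-1)^k_n ... f_0^k_1 followed by a^k_0.  Splitting off the final run of
   a's gives, for y empty or ending in a, the recursion
   V(phi(y) a^d) = sum_(c <= d) V(y b^c); words outside the image of phi, such
   as those ending in bb, have no factorization.  The central words c_0 = [],
   c_(j+1) = phi(c_j) a are the prefixes of length F_(j+3) - 2 of the Fibonacci
   word, and the recursion gives by induction V(c_j) = V(c_j a) = F_(j+1) and
   V(c_j b) = F_j.  For even j, c_j a is the prefix of length F_(j+3) - 1. *)

Definition fib_morph (w : seq bool) : seq bool :=
  flatten [seq if c == la then [:: la; lb] else [:: la] | c <- w].

Lemma fib_morph_cat u v : fib_morph (u ++ v) = fib_morph u ++ fib_morph v.
Proof. by rewrite /fib_morph map_cat flatten_cat. Qed.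

Lemma fib_morph_flatten (ss : seq (seq bool)) :
  fib_morph (flatten ss) = flatten (map fib_morph ss).
Proof. by elim: ss => //= s ss IH; rewrite fib_morph_cat IH. Qed.

Lemma fib_morph_nseq m : fib_morph (nseq m lb) = nseq m la.
Proof. by elim: m => // m IH; rewrite (fib_morph_cat [:: lb]) IH. Qed.

Lemma fib_morph_inj : injective fib_morph.
Proof.
elim=> [|[] x IH] [|[] y] //= []; try by move=> /IH ->.
- by case: x {IH} => [|[] x].
- by case: y => [|[] y].
Qed.

Lemma last_fib_morph y : last la y = la -> last lb (fib_morph y) = lb.
Proof.
by case/lastP: y => // y c; rewrite last_rcons => ->; rewrite -cats1 fib_morph_cat last_cat.
Qed.

Lemma fib_morph_rcons_b x y : fib_morph x = rcons y lb -> last lb y = la.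
Proof.
case/lastP: x => [|x []]; first by case: y.
- by rewrite -!cats1 fib_morph_cat => /(congr1 (last lb)); rewrite !last_cat.
- rewrite -cats1 fib_morph_cat -[fib_morph [:: la]]/([:: la] ++ [:: lb]) catA cats1.
  by move=> /rcons_inj [<-]; rewrite last_cat.
Qed.

Lemma eqseq_cat2r (T : eqType) (s s1 s2 : seq T) : (s1 ++ s == s2 ++ s) = (s1 == s2).
Proof. by rewrite -(can_eq revK) !rev_cat eqseq_cat // eqxx (can_eq revK). Qed.

Lemma eq_fib_morph_cat_nseq x y c d : last la y = la ->
  (fib_morph x ++ nseq c la == fib_morph y ++ nseq d la)
    = (c <= d) && (x == y ++ nseq (d - c) lb).
Proof.
(* fib_morph y is empty or ends in b, so the right-hand side ends in exactly d a's. *)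
move=> y_a; case: leqP => [le_cd | lt_dc].
  by rewrite -{1}(subnK le_cd) nseqD catA eqseq_cat2r -fib_morph_nseq -fib_morph_cat
    (inj_eq fib_morph_inj).
rewrite -(subnK (ltnW lt_dc)) nseqD catA eqseq_cat2r; apply/negbTE/eqP.
move=> /(congr1 (last lb)); rewrite last_fib_morph // last_cat.
by rewrite -subn_gt0 in lt_dc; case: (c - d) lt_dc => // e _ /=; elim: e.
Qed.

Lemma fib_gt0 n : 0 < fib n.+1.
Proof. by elim: n => //= n IH; rewrite addn_gt0 IH. Qed.

Lemma ltn_fib n : n < fib n.+2.
Proof. by elim: n => // n IH; rewrite [fib _]/= -addn1 leq_add // fib_gt0. Qed.

Lemma fibwS m : fibw m.+1 = fib_morph (fibw m).
Proof.
suff: fibw m.+1 = fib_morph (fibw m) /\ fibw m.+2 = fib_morph (fibw m.+1) by case.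
elim: m => // m [IH1 IH2]; split=> //.
by rewrite -[fibw m.+3]/(fibw m.+2 ++ fibw m.+1) fib_morph_cat -IH2 -IH1.
Qed.

Lemma size_fibw m : size (fibw m) = fib m.+2.
Proof.
suff: size (fibw m) = fib m.+2 /\ size (fibw m.+1) = fib m.+3 by case.
elim: m => // m [IH1 IH2]; split=> //.
by rewrite -[fibw m.+2]/(fibw m.+1 ++ fibw m) size_cat IH1 IH2.
Qed.

Lemma prefix_fibwS m : prefix (fibw m) (fibw m.+1).
Proof. by case: m => // m; apply: prefix_prefix. Qed.

Lemma prefix_fibw m m' : m <= m' -> prefix (fibw m) (fibw m').
Proof.
move/subnK <-; elim: (m' - m) => [|d IH]; first exact: prefix_refl.
exact: prefix_trans IH (prefix_fibwS _).
Qed.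

Lemma take_prefix (T : eqType) (s t : seq T) n :
  prefix s t -> n <= size s -> take n s = take n t.
Proof. by move=> /prefixP [u ->] le_ns; rewrite takel_cat. Qed.

Lemma fprefixE N m : N <= size (fibw m) -> fprefix N = take N (fibw m).
Proof.
move=> le_Nm; rewrite /fprefix (take_prefix (prefix_fibw (leq_maxr m N))).
  by rewrite -(take_prefix (prefix_fibw (leq_maxl m N))).
by rewrite size_fibw ltnW // ltn_fib.
Qed.

Fixpoint central (j : nat) : seq bool :=
  if j is j'.+1 then fib_morph (central j') ++ [:: la] else [::].

Lemma last_central j : last la (central j) = la.
Proof. by case: j => //= j; rewrite last_cat. Qed.

Lemma fibw_central j :
  fibw j.+1 = central j ++ (if odd j then [:: lb; la] else [:: la; lb]).
Proof.
elim: j => // j IH.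
by rewrite fibwS IH fib_morph_cat -catA /=; case: (odd j).
Qed.

Lemma size_central j : (size (central j)).+2 = fib j.+3.
Proof.
by rewrite -size_fibw fibw_central size_cat; case: (odd j); rewrite addn2.
Qed.

Lemma fprefix_central j : fprefix (fib j.+3 - 2) = central j.
Proof.
rewrite -size_central subn2 /= (fprefixE (m := j.+1)).
  by rewrite fibw_central take_size_cat.
by rewrite size_fibw -size_central ltnW.
Qed.

Lemma fprefix_central_a j : ~~ odd j -> fprefix (fib j.+3 - 1) = central j ++ [:: la].
Proof.
move=> /negbTE even_j; rewrite -size_central subn1 /= (fprefixE (m := j.+1)).
  by rewrite fibw_central even_j -[[:: la; lb]]/([:: la] ++ [:: lb]) catA take_size_cat
    // size_cat addn1.
by rewrite size_fibw -size_central.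
Qed.

Definition factw n (k : 'I_n -> nat) : seq bool :=
  flatten [seq flatten (nseq (k i) (fibw i)) | i <- rev (enum 'I_n)].

Definition nfact n B (w : seq bool) : nat :=
  \sum_(k : {ffun 'I_n -> 'I_B}) (factw (fun i => nat_of_ord (k i)) == w).

Lemma V_nfact N : V N = nfact N.+1 N.+1 (fprefix N).
Proof.
rewrite /V /nfact -sum1dep_card big_mkcond /=.
by apply: eq_bigr => k _; case: eqP.
Qed.

Lemma eq_factw n (k1 k2 : 'I_n -> nat) : k1 =1 k2 -> factw k1 = factw k2.
Proof. by move=> eq_k; rewrite /factw; congr flatten; apply: eq_map => i; rewrite eq_k. Qed.

Lemma factw0 (k : 'I_0 -> nat) : factw k = [::].
Proof. by rewrite /factw enum_ord0. Qed.

Lemma factwS n (k : 'I_n.+1 -> nat) :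
  factw k = fib_morph (factw (fun i => k (lift ord0 i))) ++ nseq (k ord0) la.
Proof.
rewrite /factw enum_ordSl rev_cons -cats1 map_cat flatten_cat /= cats0.
congr (_ ++ _); last by elim: (k ord0) => //= c ->.
rewrite fib_morph_flatten -map_rev -!map_comp; congr flatten; apply: eq_map => i.
by rewrite /comp lift0 fibwS fib_morph_flatten map_nseq.
Qed.

Lemma factw_image n (k : 'I_n -> nat) : exists x, factw k = fib_morph x.
Proof.
case: n k => [|n] k; first by exists [::]; rewrite factw0.
exists (factw (fun i => k (lift ord0 i)) ++ nseq (k ord0) lb).
by rewrite factwS fib_morph_cat fib_morph_nseq.
Qed.

Definition ffun_cons (T : finType) n (t : T) (k : {ffun 'I_n -> T}) : {ffun 'I_n.+1 -> T} :=
  [ffun i => if unlift ord0 i is Some i' then k i' else t].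

Lemma big_ffunS (R : Type) (idx : R) (op : Monoid.com_law idx) (T : finType) n
    (F : {ffun 'I_n.+1 -> T} -> R) :
  \big[op/idx]_(k : {ffun 'I_n.+1 -> T}) F k
    = \big[op/idx]_(t : T) \big[op/idx]_(k : {ffun 'I_n -> T}) F (ffun_cons t k).
Proof.
rewrite pair_big (reindex (fun p : T * {ffun 'I_n -> T} => ffun_cons p.1 p.2)) //=.
exists (fun k : {ffun 'I_n.+1 -> T} => (k ord0, [ffun i => k (lift ord0 i)])) => [[t k] _|k _].
  rewrite /ffun_cons ffunE unlift_none; congr (_, _).
  by apply/ffunP => i; rewrite !ffunE liftK.
by apply/ffunP => i; rewrite /ffun_cons ffunE; case: unliftP => [j ->|->]; rewrite ?ffunE.
Qed.

Lemma nfact0 B w : nfact 0 B w = (w == [::]).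
Proof.
rewrite /nfact; under eq_bigr do rewrite factw0.
by rewrite sum_nat_const card_ffun !card_ord expn0 mul1n eq_sym.
Qed.

Lemma nfactS n B w : nfact n.+1 B w =
  \sum_(c < B) \sum_(k : {ffun 'I_n -> 'I_B})
     (fib_morph (factw (fun i => nat_of_ord (k i))) ++ nseq c la == w).
Proof.
rewrite /nfact big_ffunS; apply: eq_bigr => c _; apply: eq_bigr => k _.
rewrite factwS /ffun_cons ffunE unlift_none.
by congr (fib_morph _ ++ _ == _); apply: eq_factw => i; rewrite ffunE liftK.
Qed.

Lemma nfact_eq0 n B w : (forall x, fib_morph x != w) -> nfact n B w = 0.
Proof.
move=> w_notin; apply: big1 => k _.
by have [x ->] := factw_image (fun i => nat_of_ord (k i)); rewrite (negbTE (w_notin x)).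
Qed.

Lemma nfact_rcons_b n B y : last lb y != la -> nfact n B (rcons y lb) = 0.
Proof. by move=> y_a; apply: nfact_eq0 => x; apply: contra y_a => /eqP/fib_morph_rcons_b ->. Qed.

Lemma nfact_fib_morph n B y d : last la y = la -> d < B ->
  nfact n.+1 B (fib_morph y ++ nseq d la) = \sum_(c < d.+1) nfact n B (y ++ nseq c lb).
Proof.
(* The exponent of f_0 is some c <= d, and the rest of the factorization is
   the image of a factorization of y b^(d - c). *)
move=> y_a lt_dB; rewrite nfactS.
under eq_bigr => c _ do under eq_bigr => k _ do rewrite eq_fib_morph_cat_nseq //.
transitivity (\sum_(c < d.+1) nfact n B (y ++ nseq (d - c) lb)).
  rewrite (big_ord_widen _ (fun c => nfact n B (y ++ nseq (d - c) lb)) lt_dB) [RHS]big_mkcond.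
  by apply: eq_bigr => c _; rewrite ltnS; case: leqP => _ //=; apply: big1.
rewrite (reindex_inj rev_ord_inj); apply: eq_bigr => c _ /=.
by rewrite subSS subKn // -ltnS.
Qed.

Lemma nfact_nil n B : 0 < B -> nfact n B [::] = 1.
Proof.
move=> B_gt0; elim: n => [|n IH]; first by rewrite nfact0.
by rewrite (@nfact_fib_morph _ _ [::] 0) // big_ord1.
Qed.

Lemma nfact_central j n B : 2 < B -> j < n ->
  [/\ nfact n B (central j) = fib j.+1,
      nfact n B (central j ++ [:: la]) = fib j.+1
    & nfact n B (central j ++ [:: lb]) = fib j].
Proof.
move=> B_gt2; have B_gt1 := ltnW B_gt2; have B_gt0 := ltnW B_gt1.
elim: j n => [|j IH] [|n] // lt_jn.
  split; [exact: nfact_nil| |exact: (@nfact_rcons_b _ _ [::])].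
  rewrite (@nfact_fib_morph _ _ [::] 1) // !big_ord_recl big_ord0 /=.
  by rewrite nfact_nil ?(@nfact_rcons_b _ _ [::]).
have [IH_c IH_a IH_b] := IH n lt_jn.
have c_a := last_central j; have fibSS : fib j.+2 = fib j.+1 + fib j by [].
split.
- rewrite (@nfact_fib_morph _ _ _ 1) // !big_ord_recl big_ord0 [LHS]/=.
  by rewrite cats0 IH_c IH_b addn0 fibSS.
- rewrite -catA (@nfact_fib_morph _ _ _ 2) // !big_ord_recl big_ord0 [LHS]/=.
  rewrite cats0 IH_c IH_b -[[:: lb; lb]]/([:: lb] ++ [:: lb]) catA cats1.
  by rewrite nfact_rcons_b ?last_cat // !addn0 fibSS.
- rewrite -catA -[[:: la] ++ _]/(fib_morph [:: la]) -fib_morph_cat -[fib_morph _]cats0.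
  by rewrite (@nfact_fib_morph _ _ _ 0) ?last_cat // big_ord1 cats0.
Qed.

Lemma V0 : V 0 = 1.
Proof. by rewrite V_nfact nfact_nil. Qed.

Lemma V1 : V 1 = 1.
Proof.
rewrite V_nfact (@nfact_fib_morph _ _ [::] 1) // !big_ord_recl big_ord0 /=.
by rewrite nfact_nil ?(@nfact_rcons_b _ _ [::]).
Qed.

Lemma V_central j : 1 < j -> V (fib j.+3 - 2) = fib j.+1.
Proof.
move=> lt1j; rewrite V_nfact fprefix_central -size_central !subSS subn0.
have := ltn_fib j.+1; rewrite -size_central ltnS => lt_jn.
have lt2n : 2 < (size (central j)).+1 by lia.
by case: (nfact_central lt2n lt_jn).
Qed.

Lemma V_central_a j : 1 < j -> ~~ odd j -> V (fib j.+3 - 1) = fib j.+1.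
Proof.
move=> lt1j even_j; rewrite V_nfact fprefix_central_a // -size_central subSS subn0.
have := ltn_fib j.+1; rewrite -size_central ltnS => lt_jn.
have lt2n : 2 < (size (central j)).+2 by lia.
by case: (nfact_central lt2n (leqW lt_jn)).
Qed.

Theorem corollary1 (k : nat) (hk : 1 <= k) :
  [/\ V (fib k.*2.+1 - 1) = fib k.*2.-1,
      V (fib k.*2.+1 - 2) = fib k.*2.-1
    & V (fib k.*2.+2 - 2) = fib k.*2].
Proof.
case: k hk => [|[|k]] // _; first by rewrite /= V0 V1.
have even_2k : ~~ odd k.*2.+2 by rewrite /= negbK odd_double.
rewrite !doubleS; split.
- exact: (@V_central_a k.*2.+2 isT even_2k).
- exact: (@V_central k.*2.+2 isT).
- exact: (@V_central k.*2.+3 isT).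
Qed.
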